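(* Let $P=[\tfrac12]_{m\times p}$ be the $m\times p$ matrix all of whose entries are $\tfrac12$. Then no ranking satisfies $(\rho,\delta)$-equal representation for any $\rho<1$ and $\delta\le\tfrac12$.
   Context: A ranking is a matrix $R\in\{0,1\}^{m\times n}$ with $\sum_{j} R_{ij}\le 1$ for each item $i\in[m]$ and $\sum_{i} R_{ij}=1$ for each position $j\in[n]$. Noise model: the groups $G_1,\dots,G_p\subseteq[m]$ are random with $\Pr[i\in G_\ell]=P_{i\ell}$, and events concerning distinct items are independent. A ranking $R$ (deterministic or random independent of the groups) satisfies $(\rho,\delta)$-equal representation if with probability at least $1-\delta$, for all $k\in[n]$ and $\ell\in[p]$, at most $\frac k2(1+\rho)$ items from $G_\ell$ appear in the first $k$ positions of $R$. *)

From HB Require Import structures.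
From mathcomp Require Import all_boot all_order all_algebra.
Set Implicit Arguments. Unset Strict Implicit. Unset Printing Implicit Defensive.
Import Order.TTheory GRing.Theory Num.Theory.
Local Open Scope ring_scope.

Section Defs.
Variable R : realFieldType.

Definition is_distr (T : finType) (mu : T -> R) : Prop :=
  (forall x, 0 <= mu x) /\ \sum_(x : T) mu x = 1.

Definition prob (T : finType) (mu : T -> R) (A : pred T) : R :=
  \sum_(x : T | A x) mu x.

(* An outcome of the random groups: g i l = true  iff  item i belongs to G_l. *)
Definition groups_outcome (m p : nat) := {ffun 'I_m -> {ffun 'I_p -> bool}}.

Definition noise_model (m p : nat) (P : 'M[R]_(m, p))
    (mu : groups_outcome m p -> R) : Prop :=
  [/\ is_distr mu,
      (forall (i : 'I_m) (l : 'I_p), prob mu (fun g => g i l) = P i l)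
    & (forall A : 'I_m -> pred {ffun 'I_p -> bool},
        prob mu (fun g => [forall i, A i (g i)])
        = \prod_(i : 'I_m) prob mu (fun g => A i (g i)))].

Definition is_ranking (m n : nat) (Rk : 'M[bool]_(m, n)) : Prop :=
  (forall i : 'I_m, (\sum_(j : 'I_n) (Rk i j : nat) <= 1)%N) /\
  (forall j : 'I_n, (\sum_(i : 'I_m) (Rk i j : nat))%N = 1%N).

Definition top_count (m n p : nat) (Rk : 'M[bool]_(m, n))
    (g : groups_outcome m p) (l : 'I_p) (k : nat) : nat :=
  (\sum_(i : 'I_m) \sum_(j : 'I_n | (j < k)%N) (Rk i j && g i l))%N.

Definition fair_event (m n p : nat) (rho : R) (Rk : 'M[bool]_(m, n))
    (g : groups_outcome m p) : bool :=
  [forall l : 'I_p, forall k : 'I_n,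
     (top_count Rk g l k.+1)%:R <= (k.+1)%:R / 2 * (1 + rho)].

(* A random ranking (independent of the groups): a distribution on matrices
   supported on rankings. Deterministic rankings are Dirac distributions. *)
Definition random_ranking (m n : nat) (nu : 'M[bool]_(m, n) -> R) : Prop :=
  is_distr nu /\ (forall Rk, nu Rk != 0 -> is_ranking Rk).

Definition equal_representation (m n p : nat) (mu : groups_outcome m p -> R)
    (nu : 'M[bool]_(m, n) -> R) (rho delta : R) : Prop :=
  1 - delta <= \sum_(Rk : 'M[bool]_(m, n)) nu Rk * prob mu (fair_event rho Rk).

End Defs.

(* The item ranked first lies in each group G_l with probability 1/2, and
   whenever it does, the top-1 prefix already contains one member of G_l,
   more than the 1/2 * (1 + rho) < 1 allowed.  So every ranking is fair with
   probability at most 1/2, and averaging over a random ranking keeps this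
   bound below 1 - delta. *)

From HB Require Import structures.
From mathcomp Require Import all_boot all_order all_algebra.
From mathcomp Require Import lra.
Set Implicit Arguments. Unset Strict Implicit. Unset Printing Implicit Defensive.
Import Order.TTheory GRing.Theory Num.Theory.
Local Open Scope ring_scope.

Section Distributions.
Variables (R : realFieldType) (T : finType) (mu : T -> R).
Hypothesis mu_distr : is_distr mu.

Lemma prob_sub (A B : pred T) :
  (forall x, A x -> B x) -> prob mu A <= prob mu B.
Proof.
move=> AB; rewrite /prob [X in _ <= X]big_mkcond [X in X <= _]big_mkcond /=.
apply: ler_sum => x _; case Ax: (A x); first by rewrite AB.
by case: (B x); rewrite ?(proj1 mu_distr).
Qed.

Lemma prob_predC (A : pred T) : prob mu (predC A) = 1 - prob mu A.
Proof.
by rewrite -(proj2 mu_distr) (bigID A) /= /prob addrC addrK.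
Qed.

Lemma expectation_le (f : T -> R) (c : R) :
  (forall x, mu x != 0 -> f x <= c) -> \sum_x mu x * f x <= c.
Proof.
move=> fc; rewrite -[c]mul1r -(proj2 mu_distr) mulr_suml.
apply: ler_sum => x _.
have [->|mu_nz] := eqVneq (mu x) 0; first by rewrite !mul0r.
by rewrite ler_wpM2l ?(proj1 mu_distr) ?fc.
Qed.

End Distributions.

Lemma ranking_filled (m n : nat) (Rk : 'M[bool]_(m, n)) :
  is_ranking Rk -> forall j, exists i, Rk i j.
Proof.
move=> [_ col_sum] j; case: (pickP (Rk^~ j)) => [i Rij | none]; first by exists i.
by move: (col_sum j); rewrite big1 // => i _; rewrite none.
Qed.

Lemma top_count_gt0 (m n p : nat) (Rk : 'M[bool]_(m, n))
    (g : groups_outcome m p) (l : 'I_p) (k : nat) (i : 'I_m) (j : 'I_n) :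
  Rk i j -> g i l -> (j < k)%N -> (0 < top_count Rk g l k)%N.
Proof.
move=> Rij gil jk; rewrite /top_count (bigD1 i) //= (bigD1 j) //=.
by rewrite Rij gil.
Qed.

Lemma fair_event_first_item (R : realFieldType) (m n p : nat) (rho : R)
    (Rk : 'M[bool]_(m, n)) (g : groups_outcome m p) (l : 'I_p)
    (i : 'I_m) (j : 'I_n) :
  rho < 1 -> Rk i j -> j = 0%N :> nat -> fair_event rho Rk g -> ~~ g i l.
Proof.
move=> rho_lt1 Rij j0 /forallP /(_ l) /forallP /(_ j); rewrite j0 => fair.
apply/negP => gil.
have : (1 : R) <= 1 / 2 * (1 + rho).
  by apply: le_trans fair; rewrite ler1n (top_count_gt0 Rij gil) ?j0.
lra.
Qed.

Lemma prob_fair_event_le (R : realFieldType) (m n p : nat) (P : 'M[R]_(m, p))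
    (mu : groups_outcome m p -> R) (rho : R) (Rk : 'M[bool]_(m, n)) (l : 'I_p) :
  (0 < n)%N -> noise_model P mu -> rho < 1 -> is_ranking Rk ->
  exists i, prob mu (fair_event rho Rk) <= 1 - P i l.
Proof.
move=> n_gt0 [mu_distr marginal _] rho_lt1 rank.
have [i Ri0] := ranking_filled rank (Ordinal n_gt0).
exists i; rewrite -marginal -prob_predC //.
by apply: prob_sub => // g; exact: fair_event_first_item rho_lt1 Ri0 (erefl _).
Qed.

Theorem proposition3p3 (R : realFieldType) (m n p : nat)
    (mu : groups_outcome m p -> R) :
  (0 < n)%N -> (0 < p)%N ->
  noise_model (const_mx (1 / 2 : R)) mu ->
  forall (nu : 'M[bool]_(m, n) -> R) (rho delta : R),
    random_ranking nu -> rho < 1 -> delta < 1 / 2 ->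
    ~ equal_representation mu nu rho delta.
Proof.
move=> n_gt0 p_gt0 noise nu rho delta [nu_distr nu_rank] rho_lt1 delta_lt.
have fair_le_half : forall Rk, nu Rk != 0 -> prob mu (fair_event rho Rk) <= 1 / 2.
  move=> Rk /nu_rank rank.
  have [i fair_le] := prob_fair_event_le (Ordinal p_gt0) n_gt0 noise rho_lt1 rank.
  by move: fair_le; rewrite mxE; lra.
rewrite /equal_representation => eq_rep.
have := le_trans eq_rep (expectation_le nu_distr fair_le_half); lra.
Qed.
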